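(* Let $r\ge 3$ be a fixed integer, let $H=(V_H,E_H)$ be a directed $r$-uniform hypergraph on $n$ nodes $u_1,\dots,u_n$ and $m$ hyperedges, and let $k\leq n$ be an integer. Then the polynomial $$P_k(x_1,\dots,x_n)=\sum_{(u_{i_1},\dots,u_{i_k})\text{ a tight walk in }H} x_{i_1}\cdots x_{i_k}$$ is computable by an arithmetic circuit of size $O(mk)$.
   Context: A directed $r$-uniform hypergraph has hyperedges that are ordered sequences of $r$ nodes. A tight walk of length $k$ in $H$ is a sequence $(u_{i_1},\dots,u_{i_k})$ of nodes, not necessarily distinct, such that every $r$ consecutive nodes $(u_{i_j},\dots,u_{i_{j+r-1}})$, $1\le j\le k-r+1$, form a hyperedge of $H$. An arithmetic circuit over a ring $K$ is a directed acyclic graph whose nodes are labeled by $+$, $\times$, input variables $x_1,\dots,x_n$, or constants from $K$; each output node computes a polynomial in $K[x_1,\dots,x_n]$, and the size of the circuit is its number of nodes. *)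

From HB Require Import structures.
From mathcomp Require Import all_boot all_order all_algebra.
From mathcomp Require Import mpoly.
Set Implicit Arguments. Unset Strict Implicit. Unset Printing Implicit Defensive.
Import GRing.Theory.
Local Open Scope ring_scope.

(** Directed r-uniform hypergraph on nodes 'I_n: a set of hyperedges,
    each an ordered r-tuple of nodes.  m = #|E|. *)

Definition tight_walk (r n k : nat) (E : {set r.-tuple 'I_n}) (w : k.-tuple 'I_n) : bool :=
  [forall j : 'I_k.+1, (j + r <= k)%N ==>
     [exists e in E, val e == take r (drop j w)]].

Definition Pk (K : comNzRingType) (r n : nat) (E : {set r.-tuple 'I_n}) (k : nat)
  : {mpoly K[n]} :=
  \sum_(w : k.-tuple 'I_n | tight_walk E w) \prod_(i <- w) 'X_i.

(** Arithmetic circuits: a DAG given as a list of nodes in topological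
    order; a +/× node lists its (earlier) input nodes by position. *)
Inductive gate (K : Type) (n : nat) :=
| GIn of 'I_n
| GConst of K
| GAdd of seq nat
| GMul of seq nat.

Definition circuit (K : Type) (n : nat) := seq (gate K n).

Definition gate_wf (K : Type) (n : nat) (pos : nat) (g : gate K n) : bool :=
  match g with
  | GAdd s | GMul s => all (fun j => j < pos)%N s
  | _ => true
  end.

Fixpoint circuit_wf_aux (K : Type) (n : nat) (pos : nat) (c : circuit K n) : bool :=
  match c with
  | [::] => true
  | g :: c' => gate_wf pos g && circuit_wf_aux pos.+1 c'
  end.

Definition circuit_wf (K : Type) (n : nat) (c : circuit K n) := circuit_wf_aux 0 c.

Definition gate_val (K : comNzRingType) (n : nat) (vals : seq {mpoly K[n]})
  (g : gate K n) : {mpoly K[n]} :=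
  match g with
  | GIn i => 'X_i
  | GConst a => a%:MP
  | GAdd s => \sum_(j <- s) nth 0 vals j
  | GMul s => \prod_(j <- s) nth 0 vals j
  end.

Fixpoint circuit_vals_aux (K : comNzRingType) (n : nat) (vals : seq {mpoly K[n]})
  (c : circuit K n) : seq {mpoly K[n]} :=
  match c with
  | [::] => vals
  | g :: c' => circuit_vals_aux (rcons vals (gate_val vals g)) c'
  end.

Definition circuit_vals (K : comNzRingType) (n : nat) (c : circuit K n) :=
  circuit_vals_aux [::] c.

Definition computes (K : comNzRingType) (n : nat) (c : circuit K n) (p : {mpoly K[n]}) : Prop :=
  circuit_wf c /\ p \in circuit_vals c.

Definition csize (K : Type) (n : nat) (c : circuit K n) : nat := size c.

From HB Require Import structures.
From mathcomp Require Import all_boot all_order all_algebra.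
From mathcomp Require Import mpoly.
From mathcomp Require Import zify.
Set Implicit Arguments. Unset Strict Implicit. Unset Printing Implicit Defensive.
Import GRing.Theory.

(* Sort the tight walks of length k >= r by their first hyperedge e and let
   W_k(e) be the sum of their monomials.  Then P_k is the sum of the W_k(e),
   W_r(e) is the monomial of e, and cutting off the first node gives
   W_{k+1}(e) = x_{e_1} * sum of W_k(e') over the hyperedges e' whose first
   r-1 nodes are the last r-1 nodes of e.  Evaluating this recurrence level by
   level uses a constant number of gates per hyperedge and level (the sum gates
   have unbounded fan-in), hence O(mk) gates in total. *)

Lemma big_tuple_cons (R : Type) (idx : R) (op : Monoid.com_law idx)
    (T : finType) (k : nat) (P : pred (k.+1.-tuple T)) (F : k.+1.-tuple T -> R) :
  \big[op/idx]_(w | P w) F w =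
  \big[op/idx]_(x : T) \big[op/idx]_(t : k.-tuple T | P [tuple of x :: t])
     F [tuple of x :: t].
Proof.
rewrite pair_big_dep (reindex (fun p : T * k.-tuple T => [tuple of p.1 :: p.2])) /=.
  by apply: eq_bigl => -[x t].
exists (fun w => (thead w, [tuple of behead w])) => [[x t] _ | w _] /=.
  by rewrite theadE; congr pair; apply: val_inj.
by rewrite -tuple_eta.
Qed.

(* Hyperedges have r.+1 nodes, so that each has a head [thead e] and a tail
   [behead e] of length r. *)
Section TightWalks.
Variables (K : comNzRingType) (n r : nat) (E : {set r.+1.-tuple 'I_n}).
Local Open Scope ring_scope.

Definition monomial (s : seq 'I_n) : {mpoly K[n]} := \prod_(i <- s) 'X_i.

Definition is_edge (s : seq 'I_n) := [exists e in E, val e == s].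

Definition tight (s : seq 'I_n) :=
  forall j, (j + r.+1 <= size s)%N -> is_edge (take r.+1 (drop j s)).

Lemma tight_walkP k (w : k.-tuple 'I_n) : reflect (tight w) (tight_walk E w).
Proof.
apply: (iffP forallP) => [walk_w j | tight_w j].
  rewrite size_tuple => le_jk; have lt_jk : (j < k.+1)%N by lia.
  exact: implyP (walk_w (Ordinal lt_jk)) le_jk.
by apply/implyP => le_jk; apply: tight_w; rewrite size_tuple.
Qed.

Lemma tight_cons x s : (r.+1 <= size s)%N ->
  tight (x :: s) <-> is_edge (x :: take r s) /\ tight s.
Proof.
move=> le_rs; split => [tight_xs | [edge_x tight_s] [|j] le_js] //.
- split; first by apply: (tight_xs 0%N) => /=; lia.
  by move=> j le_js; apply: (tight_xs j.+1) => /=; lia.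
- by apply: tight_s; move: le_js => /=; lia.
Qed.

Lemma tight_take_edge s : (r.+1 <= size s)%N -> tight s ->
  exists2 e, e \in E & val e = take r.+1 s.
Proof.
move=> le_rs /(_ 0%N le_rs) /existsP[e /andP[Ee /eqP e_s]].
by exists e; rewrite // e_s drop0.
Qed.

Definition Pk_from k (e : r.+1.-tuple 'I_n) : {mpoly K[n]} :=
  \sum_(w : k.-tuple 'I_n | tight_walk E w && (take r.+1 w == e)) monomial w.

Lemma sum_tight_walk_by_first_edge k (P : pred (seq 'I_n))
    (F : k.-tuple 'I_n -> {mpoly K[n]}) : (r.+1 <= k)%N ->
  \sum_(w | tight_walk E w && P (take r.+1 w)) F w =
  \sum_(e in E | P e) \sum_(w | tight_walk E w && (take r.+1 w == e)) F w.
Proof.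
move=> le_rk; rewrite (exchange_big_dep (tight_walk E)) => [|e w _ /andP[] //].
rewrite big_mkcondr /=; apply: eq_bigr => w walk_w.
have [|e1 Ee1 e1_w] := tight_take_edge _ (elimT (tight_walkP w) walk_w).
  by rewrite size_tuple.
have first_edge e : [&& (e \in E) && P e, tight_walk E w & take r.+1 w == e]
                    = (e == e1) && P (take r.+1 w).
  apply/idP/idP => [/and3P[/andP[_ Pe] _ /eqP w_e] | /andP[/eqP-> Pw]].
    by rewrite w_e Pe andbT -val_eqE /= e1_w w_e.
  by rewrite Ee1 e1_w Pw walk_w eqxx.
under eq_bigl do rewrite first_edge.
case: (P _); last by rewrite big_pred0 // => e; rewrite andbF.
by under eq_bigl do rewrite andbT; rewrite big_pred1_eq.
Qed.

Lemma Pk_sum_from k : (r.+1 <= k)%N -> Pk K E k = \sum_(e in E) Pk_from k e.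
Proof.
move=> le_rk.
have := sum_tight_walk_by_first_edge predT (fun w : k.-tuple _ => monomial w) le_rk.
rewrite /Pk_from; under eq_bigl do rewrite andbT.
by under [RHS]eq_bigl do rewrite andbT.
Qed.

Lemma Pk_from_edge e : e \in E -> Pk_from r.+1 e = monomial e.
Proof.
move=> Ee; rewrite /Pk_from (big_pred1 e) // => w /=.
rewrite take_oversize ?size_tuple //; apply/andP/eqP => [[_ /eqP]|->].
  exact: val_inj.
split=> //; apply/tight_walkP => j; rewrite size_tuple => le_jr.
have -> : j = 0%N by lia.
by apply/existsP; exists e; rewrite Ee drop0 take_oversize ?size_tuple /=.
Qed.

Lemma Pk_fromS k e : (r.+1 <= k)%N -> e \in E ->
  Pk_from k.+1 e =
  'X_(thead e) * \sum_(e' in E | take r e' == behead e) Pk_from k e'.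
Proof.
move=> le_rk Ee; rewrite /Pk_from big_tuple_cons.
have split_walk x (t : k.-tuple 'I_n) :
    tight_walk E [tuple of x :: t] && (take r.+1 (x :: t) == e) =
    (x == thead e) && (tight_walk E t && (take r t == behead e)).
  have e_eta : val e = thead e :: behead e := congr1 val (tuple_eta e).
  rewrite /= e_eta eqseq_cons.
  case: (x =P thead e) => [-> | _]; rewrite ?andbF //=.
  case: (take r t =P behead e) => [t_e | _]; rewrite ?andbF //= !andbT.
  have edge_xt : is_edge (thead e :: take r t).
    by apply/existsP; exists e; rewrite Ee t_e e_eta /=; apply: eqxx.
  apply/tight_walkP/tight_walkP => [/tight_cons[|//] | tight_t].
    by rewrite size_tuple.
  by apply/tight_cons; rewrite ?size_tuple.
under eq_bigr do under eq_bigl do rewrite split_walk.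
rewrite (bigD1 (thead e)) //= [X in _ + X]big1 ?addr0; last first.
  by move=> x /negbTE x_e; rewrite big_pred0 // => t; rewrite x_e.
under eq_bigl do rewrite eqxx.
under eq_bigr do rewrite /monomial big_cons.
rewrite -mulr_sumr; congr (_ * _).
apply: eq_trans (sum_tight_walk_by_first_edge (fun s => take r s == behead e) _ le_rk).
by apply: eq_bigl => t; rewrite /= take_takel.
Qed.

End TightWalks.

Section CircuitSemantics.
Variables (K : comNzRingType) (n : nat).
Local Open Scope ring_scope.

Definition gate_eval (V : nat -> {mpoly K[n]}) (g : gate K n) : {mpoly K[n]} :=
  match g with
  | GIn i => 'X_i
  | GConst a => a%:MP
  | GAdd s => \sum_(j <- s) V j
  | GMul s => \prod_(j <- s) V j
  end.

Lemma gate_val_mkseq V p g :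
  gate_wf p g -> gate_val (mkseq V p) g = gate_eval V g.
Proof.
by case: g => //= s /allP wf_s; apply: eq_big_seq => j /wf_s; apply: nth_mkseq.
Qed.

Lemma circuit_wf_aux_rcons pos (c : circuit K n) g :
  circuit_wf_aux pos (rcons c g) = circuit_wf_aux pos c && gate_wf (pos + size c) g.
Proof.
elim: c pos => [|g' c IHc] pos /=; first by rewrite addn0 andbT.
by rewrite IHc addSnnS andbA.
Qed.

Lemma circuit_vals_aux_rcons vals (c : circuit K n) g :
  circuit_vals_aux vals (rcons c g) =
  rcons (circuit_vals_aux vals c) (gate_val (circuit_vals_aux vals c) g).
Proof. by elim: c vals => //= g' c IHc vals; rewrite IHc. Qed.

Section Mkseq.
Variables (g : nat -> gate K n) (V : nat -> {mpoly K[n]}) (N : nat).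
Hypothesis g_wf : forall p, (p < N)%N -> gate_wf p (g p).
Hypothesis g_eval : forall p, (p < N)%N -> gate_eval V (g p) = V p.

Lemma circuit_wf_mkseq : circuit_wf (mkseq g N).
Proof.
elim: N g_wf => [//|N' IHN] wf_N'.
rewrite mkseqS /circuit_wf circuit_wf_aux_rcons size_mkseq wf_N' // andbT.
exact: IHN (fun p lt_p => wf_N' p (ltnW lt_p)).
Qed.

Lemma circuit_vals_mkseq : circuit_vals (mkseq g N) = mkseq V N.
Proof.
elim: N g_wf g_eval => [//|N' IHN] wf_N' eval_N'.
have IH := IHN (fun p lt_p => wf_N' p (ltnW lt_p)) (fun p lt_p => eval_N' p (ltnW lt_p)).
rewrite !mkseqS /circuit_vals circuit_vals_aux_rcons -/(circuit_vals _) IH.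
by rewrite gate_val_mkseq ?eval_N' ?wf_N'.
Qed.

Lemma computes_mkseq p : (p < N)%N -> computes (mkseq g N) (V p).
Proof.
split; first exact: circuit_wf_mkseq.
by rewrite circuit_vals_mkseq; apply: map_f; rewrite mem_iota.
Qed.

End Mkseq.
End CircuitSemantics.

Section WalkCircuit.
Variables (K : comNzRingType) (n r : nat) (E : {set r.+1.-tuple 'I_n}).
Variables (e0 : r.+1.-tuple 'I_n) (d : nat).
Local Open Scope ring_scope.
Local Notation m := #|E|.

(* [e0] is only the default of [nth]: edges are used at indices i < #|E|. *)
Definition edge_at i := nth e0 (enum E) i.

Definition follows i' i := take r (edge_at i') == behead (edge_at i).

(* Level L <= d computes the walks of length L + r.+1, with a block of r.+3
   gates per edge i: slots 0..r hold the nodes of edge i, slot r.+1 adds up the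
   level L-1 results of the edges following i (it is idle at level 0), and slot
   r.+2 computes [Pk_from (L + r.+1) (edge_at i)]. *)
Definition slot L i t := ((L * m + i) * r.+3 + t)%N.

Definition out_slot := (d.+1 * m * r.+3)%N.

Definition block_gate L i t : gate K n :=
  if (t <= r)%N then GIn K (tnth (edge_at i) (inord t))
  else if t == r.+1 then
    if L is L'.+1 then GAdd K n [seq slot L' i' r.+2 | i' <- iota 0 m & follows i' i]
    else GAdd K n [::]
  else if L is L'.+1 then GMul K n [:: slot L i 0; slot L i r.+1]
  else GMul K n [seq slot 0 i t' | t' <- index_iota 0 r.+1].

Definition block_val L i t : {mpoly K[n]} :=
  if (t <= r)%N then 'X_(tnth (edge_at i) (inord t))
  else if t == r.+1 then
    if L is L'.+1 then
      \sum_(i' <- iota 0 m | follows i' i) Pk_from K E (L' + r.+1) (edge_at i')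
    else 0
  else Pk_from K E (L + r.+1) (edge_at i).

Definition decode T (block : nat -> nat -> nat -> T) (out : T) p : T :=
  if (p < out_slot)%N
  then block (p %/ r.+3 %/ m)%N (p %/ r.+3 %% m)%N (p %% r.+3)%N
  else out.

Definition out_gate := GAdd K n [seq slot d i r.+2 | i <- iota 0 m].

Definition walk_gate := decode block_gate out_gate.

Definition walk_val := decode block_val (Pk K E (d + r.+1)).

Definition walk_circuit : circuit K n := mkseq walk_gate out_slot.+1.

Lemma edge_at_in i : (i < m)%N -> edge_at i \in E.
Proof. by move=> lt_im; rewrite -mem_enum mem_nth // -cardE. Qed.

Lemma sum_edges (P : pred (r.+1.-tuple 'I_n)) (F : r.+1.-tuple 'I_n -> {mpoly K[n]}) :
  \sum_(e in E | P e) F e = \sum_(i <- iota 0 m | P (edge_at i)) F (edge_at i).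
Proof. by rewrite -big_enum_cond (big_nth e0) -cardE /index_iota subn0. Qed.

Lemma slot_lt_next L L' i i' t t' :
  (L < L')%N -> (i < m)%N -> (t < r.+3)%N -> (slot L i t < slot L' i' t')%N.
Proof.
move=> lt_LL' lt_im lt_t.
have le_level : (L.+1 * m <= L' * m)%N by rewrite leq_mul2r lt_LL' orbT.
have lt_block : (L * m + i < L' * m + i')%N by rewrite mulSnr in le_level; lia.
have : ((L * m + i).+1 * r.+3 <= (L' * m + i') * r.+3)%N.
  by rewrite leq_mul2r lt_block orbT.
rewrite /slot mulSnr; lia.
Qed.

Lemma slot_lt_out L i t :
  (L <= d)%N -> (i < m)%N -> (t < r.+3)%N -> (slot L i t < out_slot)%N.
Proof.
move=> le_Ld lt_im lt_t; have := @slot_lt_next L d.+1 i 0 t 0 le_Ld lt_im lt_t.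
by rewrite /slot /out_slot !addn0.
Qed.

Lemma slotP p : (p < out_slot)%N ->
  exists L i t, [/\ (L <= d)%N, (i < m)%N, (t < r.+3)%N & p = slot L i t].
Proof.
move=> lt_p_out; have m_gt0 : (0 < m)%N by move: lt_p_out; rewrite /out_slot; nia.
exists (p %/ r.+3 %/ m)%N, (p %/ r.+3 %% m)%N, (p %% r.+3)%N.
split; rewrite ?ltn_pmod //.
  by rewrite -ltnS ltn_divLR // ltn_divLR // mulnA.
by rewrite /slot -!divn_eq.
Qed.

Lemma decode_slot T (block : nat -> nat -> nat -> T) out L i t :
  (L <= d)%N -> (i < m)%N -> (t < r.+3)%N ->
  decode block out (slot L i t) = block L i t.
Proof.
move=> le_Ld lt_im lt_t; have m_gt0 : (0 < m)%N := leq_ltn_trans (leq0n i) lt_im.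
rewrite /decode slot_lt_out // /slot divnMDl // (divn_small lt_t) addn0.
by rewrite divnMDl // (divn_small lt_im) addn0 !modnMDl (modn_small lt_t) modn_small.
Qed.

Lemma decode_out T (block : nat -> nat -> nat -> T) out : decode block out out_slot = out.
Proof. by rewrite /decode ltnn. Qed.

Lemma block_gate_sum L i : block_gate L i r.+1 =
  if L is L'.+1 then GAdd K n [seq slot L' i' r.+2 | i' <- iota 0 m & follows i' i]
  else GAdd K n [::].
Proof. by rewrite /block_gate ifN ?eqxx //; lia. Qed.

Lemma block_gate_result L i : block_gate L i r.+2 =
  if L is L'.+1 then GMul K n [:: slot L i 0; slot L i r.+1]
  else GMul K n [seq slot 0 i t' | t' <- index_iota 0 r.+1].
Proof. by rewrite /block_gate !ifN //; lia. Qed.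

Lemma block_val_input L i t :
  (t <= r)%N -> block_val L i t = 'X_(tnth (edge_at i) (inord t)).
Proof. by rewrite /block_val => ->. Qed.

Lemma block_val_sum L i : block_val L i r.+1 =
  if L is L'.+1 then
    \sum_(i' <- iota 0 m | follows i' i) Pk_from K E (L' + r.+1) (edge_at i')
  else 0.
Proof. by rewrite /block_val ifN ?eqxx //; lia. Qed.

Lemma block_val_result L i : block_val L i r.+2 = Pk_from K E (L + r.+1) (edge_at i).
Proof. by rewrite /block_val !ifN //; lia. Qed.

Lemma walk_val_slot L i t : (L <= d)%N -> (i < m)%N -> (t < r.+3)%N ->
  walk_val (slot L i t) = block_val L i t.
Proof. exact: decode_slot. Qed.

Lemma slot_cases t : (t < r.+3)%N -> [\/ (t <= r)%N, t = r.+1 | t = r.+2].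
Proof.
move=> lt_t; have [le_tr | gt_tr] := leqP t r; first by constructor 1.
by have [-> | ne_t] := eqVneq t r.+1; [constructor 2 | constructor 3; lia].
Qed.

Lemma block_gate_wf L i t : (L <= d)%N -> (i < m)%N -> (t < r.+3)%N ->
  gate_wf (slot L i t) (block_gate L i t).
Proof.
move=> le_Ld lt_im /slot_cases[le_tr | -> | ->].
- by rewrite /block_gate le_tr.
- rewrite block_gate_sum; case: L le_Ld => [//|L] le_Ld.
  apply/allP => ? /mapP[i']; rewrite mem_filter mem_iota => /and3P[_ _ lt_i'm] ->.
  exact: slot_lt_next.
- rewrite block_gate_result /slot; case: L le_Ld => [|L] le_Ld.
    by apply/allP => ? /mapP[t']; rewrite mem_index_iota => /andP[_ lt_t'] ->; lia.
  by rewrite /=; lia.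
Qed.

Lemma block_gate_eval L i t : (L <= d)%N -> (i < m)%N -> (t < r.+3)%N ->
  gate_eval walk_val (block_gate L i t) = block_val L i t.
Proof.
move=> le_Ld lt_im /slot_cases[le_tr | -> | ->].
- by rewrite /block_gate le_tr block_val_input.
- rewrite block_gate_sum block_val_sum; case: L le_Ld => [|L] le_Ld /=.
    by rewrite big_nil.
  rewrite big_map big_filter [LHS]big_seq_cond [RHS]big_seq_cond.
  apply: eq_bigr => i' /andP[]; rewrite mem_iota => /andP[_ lt_i'm] _.
  by rewrite walk_val_slot ?block_val_result //; apply: ltnW.
- rewrite block_gate_result block_val_result; have Ei := edge_at_in lt_im.
  case: L le_Ld => [|L] le_Ld; rewrite /gate_eval.
    rewrite big_map big_mkord Pk_from_edge // /monomial big_tuple.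
    apply: eq_bigr => t' _; have le_t'r : (t' <= r)%N := ltn_ord t'.
    by rewrite walk_val_slot ?block_val_input ?inord_val //; lia.
  rewrite big_cons big_seq1 !walk_val_slot // block_val_input // block_val_sum.
  have -> : inord 0 = ord0 :> 'I_r.+1 by apply: val_inj; rewrite /= inordK.
  by rewrite (@Pk_fromS K n r E (L + r.+1)) ?sum_edges //; lia.
Qed.

Lemma out_gate_wf : gate_wf out_slot out_gate.
Proof.
by apply/allP => ? /mapP[i]; rewrite mem_iota => /andP[_ lt_im] ->; apply: slot_lt_out.
Qed.

Lemma out_gate_eval : gate_eval walk_val out_gate = Pk K E (d + r.+1).
Proof.
rewrite /out_gate /gate_eval big_map Pk_sum_from ?leq_addl //.
rewrite -big_enum (big_nth e0) -cardE /index_iota subn0.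
apply: eq_big_seq => i; rewrite mem_iota => /andP[_ lt_im].
by rewrite walk_val_slot ?block_val_result.
Qed.

Lemma walk_gate_correct p : (p <= out_slot)%N ->
  gate_wf p (walk_gate p) /\ gate_eval walk_val (walk_gate p) = walk_val p.
Proof.
rewrite leq_eqVlt => /predU1P[-> | /slotP[L [i [t [le_Ld lt_im lt_t ->]]]]].
  rewrite /walk_gate /walk_val !decode_out.
  by split; [apply: out_gate_wf | apply: out_gate_eval].
rewrite /walk_gate /walk_val !decode_slot //.
by split; [apply: block_gate_wf | apply: block_gate_eval].
Qed.

Lemma walk_circuit_computes : computes walk_circuit (Pk K E (d + r.+1)).
Proof.
rewrite -(decode_out block_val (Pk K E (d + r.+1))) -/walk_val.
by apply: computes_mkseq => [p /walk_gate_correct[] | p /walk_gate_correct[] |].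
Qed.

End WalkCircuit.

Theorem mainTheorem5 (r : nat) (hr : 3 <= r) :
  exists C : nat,
    forall (K : comNzRingType) (n : nat) (E : {set r.-tuple 'I_n}) (k : nat),
      r <= k -> k <= n ->
      exists c : circuit K n,
        computes c (Pk K E k) /\ csize c <= C * (#|E| * k + 1).
Proof.
case: r hr => [|r] // _; exists r.+3 => K n E k le_rk le_kn.
have n_gt0 : 0 < n by lia.
pose e0 := [tuple of nseq r.+1 (Ordinal n_gt0)].
have -> : k = (k - r.+1) + r.+1 by rewrite subnK.
exists (walk_circuit K E e0 (k - r.+1)); split; first exact: walk_circuit_computes.
rewrite /csize size_mkseq /out_slot; nia.
Qed.
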